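(* Let $\mathcal{R}$ be a commutative, associative real algebra with unit, $l\ge1$, and $m_1,\ldots,m_l$ positive integers. Let $A_1,\ldots,A_l\in M^{\infty\times\infty}_0(\mathcal{R}[e^{t_1},\ldots,e^{t_{l+1}}])$ satisfy: a) $A_iA_j=A_jA_i$ for all $i,j$; b) $\partial_iA_j=\partial_jA_i$ for $1\le i,j\le l$ (with $\partial_i$ applied entrywise); c) for each $i$, $A_i=A_i'+A_i''$, where $A_i'$ is strictly lower triangular and each of its entries is a linear combination of monomials $e^{td}$, $d=(d_1,\ldots,d_{l+1})\ge0$, with $d_i-m_id_{l+1}\ne0$, and $A_i''$ is strictly upper triangular with entries in $\mathcal{R}$ (independent of $t$). Consider the system $( * )$: $\partial_ig=A_ig$, $1\le i\le l$, for $g=\sum_{d\ge0}g_d(t_1,\ldots,t_l)e^{td}\in\mathcal{R}^\infty_0[t_1,\ldots,t_l][[e^{t_1},\ldots,e^{t_{l+1}}]]$. Then the solutions of $( * )$ are uniquely determined by the constant terms $g_d^0\in\mathcal{R}^\infty_0$ of those $g_d$ with $d_1=m_1d_{l+1},\ldots,d_l=m_ld_{l+1}$. More precisely, solutions satisfy recurrence relations $$g_d=\begin{cases}G_d(g_d^0,\ g_{d'}\mid d'<d)&\text{if } d_i=m_id_{l+1}\text{ for all }1\le i\le l,\\ G_d(g_{d'}\mid d'<d)&\text{otherwise,}\end{cases}$$ where $d'<d$ means $d'\le d$ componentwise and $d'\ne d$, and each $G_d$ is $\mathcal{R}$-linear in coefficients: every coefficient of the polynomial $g_d$ is of the form $C_0g_d^0+\sum_jC_jv_j$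 (first case) or $\sum_jC_jv_j$ (second case), with $C_j\in M^{\infty\times\infty}_0(\mathcal{R})$ and $v_j\in\mathcal{R}^\infty_0$ coefficients of polynomials $g_{d'}$ with $d'<d$.
   Context: $\mathcal{R}^\infty_0$ denotes sequences (indexed by positive integers) in $\mathcal{R}$ with finite support; for a ring $\mathcal{S}$, $M^{\infty\times\infty}_0(\mathcal{S})$ denotes infinite matrices indexed by positive integers each of whose columns has finitely many nonzero entries (acting on finitely supported sequences). $e^{td}=e^{t_1d_1}\cdots e^{t_{l+1}d_{l+1}}$, and the $e^{t_j}$ are treated as formal multiplicative variables. The operator $\partial_i$ ($1\le i\le l$) is $\mathcal{R}$-linear and defined by $\partial_i(ge^{td})=\frac{\partial g}{\partial t_i}e^{td}+(d_i-m_id_{l+1})ge^{td}$ for $g$ polynomial in $t_1,\ldots,t_l$. *)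

From HB Require Import structures.
From mathcomp Require Import all_boot all_order all_algebra.
From mathcomp Require Import boolp classical_sets functions cardinality fsbigop reals.
Set Implicit Arguments. Unset Strict Implicit. Unset Printing Implicit Defensive.
Import Order.TTheory GRing.Theory Num.Theory.
Local Open Scope classical_set_scope.
Local Open Scope ring_scope.

(* Conventions.
   - Positive-integer indices 1,2,3,... of sequences / infinite matrices are
     represented by nat 0,1,2,... (shift by one).
   - R^oo_0 : functions nat -> R with finite support.
   - M_0^{oo x oo}(S) : functions nat -> nat -> S (row, column) with every
     column finitely supported.
   - Exponent vectors d = (d_1,...,d_{l+1}) : {ffun 'I_l.+1 -> nat}, where
     d_{l+1} is the entry at ord_max and d_i (1<=i<=l) is at widen i.
   - Elements of R[e^{t_1},...,e^{t_{l+1}}] : coefficient functions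
     (exponent -> R) with finite support (coefficient of e^{td}).
   - Elements of R^oo_0[t_1..t_l][[e^{t_1},..,e^{t_{l+1}}]] : functions
     g : expo l.+1 -> expo l -> nat -> R; g d k p is the p-th entry of the
     coefficient of t^k in g_d. *)

Definition expo (n : nat) := {ffun 'I_n -> nat}.
Definition expo0 (n : nat) : expo n := [ffun=> 0%N].
Definition expo_le (n : nat) (d' d : expo n) : bool := [forall i, (d' i <= d i)%N].
Definition expo_lt (n : nat) (d' d : expo n) : bool := expo_le d' d && (d' != d).
Definition expo_sub (n : nat) (d d' : expo n) : expo n := [ffun i => (d i - d' i)%N].
Definition expo_incr (n : nat) (k : expo n) (i : 'I_n) : expo n :=
  [ffun j => (k j + (j == i))%N].

Definition iwiden (l : nat) (i : 'I_l) : 'I_l.+1 := widen_ord (leqnSn l) i.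

Definition wt (R : ringType) (l : nat) (m : 'I_l -> nat) (i : 'I_l) (d : expo l.+1) : R :=
  ((d (iwiden i))%:Z - (m i * d ord_max)%N%:Z)%:~R.

Definition on_diag (l : nat) (m : 'I_l -> nat) (d : expo l.+1) : bool :=
  [forall i : 'I_l, d (iwiden i) == (m i * d ord_max)%N].

Definition fin_vec (R : nmodType) (v : nat -> R) : Prop :=
  exists N, forall p, (N <= p)%N -> v p = 0.

Definition colfin_mx (R : nmodType) (C : nat -> nat -> R) : Prop :=
  forall q, fin_vec (fun p => C p q).

Definition is_epoly (R : nmodType) (n : nat) (a : expo n -> R) : Prop :=
  finite_set [set d | a d != 0].

Definition epoly_mx (R : nmodType) (n : nat) (A : nat -> nat -> expo n -> R) : Prop :=
  (forall p q, is_epoly (A p q)) /\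
  (forall q, exists N, forall p, (N <= p)%N -> forall d, A p q d = 0).

Definition mxv (R : ringType) (C : nat -> nat -> R) (v : nat -> R) (p : nat) : R :=
  \sum_(q \in [set: nat]) (C p q * v q).

Definition emul (R : ringType) (n : nat) (a b : expo n -> R) (d : expo n) : R :=
  \sum_(d' \in [set d' : expo n | expo_le d' d]) (a d' * b (expo_sub d d')).

Definition emx_mul (R : ringType) (n : nat) (A B : nat -> nat -> expo n -> R)
    (p r : nat) (d : expo n) : R :=
  \sum_(q \in [set: nat]) emul (A p q) (B q r) d.

(* entrywise partial_i of a matrix with entries in R[e^t] (no t-dependence) *)
Definition dmx (R : ringType) (l : nat) (m : 'I_l -> nat) (i : 'I_l)
    (A : nat -> nat -> expo l.+1 -> R) (p q : nat) (d : expo l.+1) : R :=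
  wt R m i d * A p q d.

Definition is_series (R : nmodType) (l : nat) (g : expo l.+1 -> expo l -> nat -> R) : Prop :=
  forall d, finite_set [set k | exists p, g d k p != 0] /\
            forall k, fin_vec (g d k).

Definition dser (R : ringType) (l : nat) (m : 'I_l -> nat) (i : 'I_l)
    (g : expo l.+1 -> expo l -> nat -> R) (d : expo l.+1) (k : expo l) (p : nat) : R :=
  (k i).+1%:R * g d (expo_incr k i) p + wt R m i d * g d k p.

Definition mxser (R : ringType) (l : nat) (A : nat -> nat -> expo l.+1 -> R)
    (g : expo l.+1 -> expo l -> nat -> R) (d : expo l.+1) (k : expo l) (p : nat) : R :=
  \sum_(q \in [set: nat])
    \sum_(d' \in [set d' : expo l.+1 | expo_le d' d]) (A p q d' * g (expo_sub d d') k q).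

Definition is_solution (R : ringType) (l : nat) (m : 'I_l -> nat)
    (A : 'I_l -> nat -> nat -> expo l.+1 -> R) (g : expo l.+1 -> expo l -> nat -> R) : Prop :=
  is_series g /\ forall i d k p, dser m i g d k p = mxser (A i) g d k p.

From HB Require Import structures.
From mathcomp Require Import all_boot all_order all_algebra.
From mathcomp Require Import boolp classical_sets functions cardinality fsbigop reals.
From mathcomp Require Import zify ring.
Set Implicit Arguments. Unset Strict Implicit. Unset Printing Implicit Defensive.
Import Order.TTheory GRing.Theory Num.Theory.
Local Open Scope classical_set_scope.
Local Open Scope ring_scope.

(** Comparing the coefficients of [e^{td}] in [d_i g = A_i g] gives, for each [i],
    [dg_d/dt_i + (d_i - m_i d_{l+1}) g_d = A_i(0) g_d + sum_{0 <> d' <= d} A_i(d') g_{d-d'}],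
    where the constant term [A_i(0)] is strictly upper triangular ([A_i'] has no constant
    term, its monomials having nonzero weight).  By induction on [d], [g_d] is a linear
    function of the constant terms [g_e^0] of the diagonal exponents [e <= d].  If some
    weight [c = d_i - m_i d_{l+1}] is nonzero, [c - A_i(0)] is invertible on finitely
    supported vectors, and the [i]-th equation determines the [t]-coefficients of [g_d]
    from the top degree downwards.  If [d] is diagonal all weights vanish, and the
    equations determine the coefficient of [t^k] from lower powers, hence from [g_d^0].
    The matrices of the recurrence are the values of these linear maps on unit vectors. *)

Lemma fsbig_nat_bounded (V : nmodType) (f : nat -> V) n :
  (forall q, (n <= q)%N -> f q = 0) -> \sum_(q \in [set: nat]) f q = \sum_(0 <= q < n) f q.
Proof.
move=> f0; rewrite big_mkord fsbig_ord; apply/esym/fsbig_widen => // q [_ /=].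
by move=> /negP; rewrite -leqNgt; exact: f0.
Qed.

Lemma fsbig_nat_only (V : nmodType) (f : nat -> V) n :
  (forall q, q != n -> f q = 0) -> \sum_(q \in [set: nat]) f q = f n.
Proof.
move=> f0; rewrite -(fsbig_widen [set n] [set: nat]) ?fsbig_set1 // => q [_ /=].
by move=> /eqP; apply: f0.
Qed.

Lemma finite_uniform_bound (T : eqType) (D : set T) (P : T -> nat -> Prop) :
  finite_set D -> (forall x n n', (n <= n')%N -> P x n -> P x n') ->
  (forall x, D x -> exists n, P x n) -> exists n, forall x, D x -> P x n.
Proof.
move=> /finite_seqP[s ->] Pmono; elim: s => [|a s IH] HP; first by exists 0%N.
have [n1 Pa] := HP a (mem_head a s).
have [|n2 Ps] := IH; first by move=> x xs; apply: HP; rewrite /= inE xs orbT.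
exists (maxn n1 n2) => x; rewrite /= inE => /orP[/eqP->|xs].
  by apply: Pmono Pa; rewrite leq_maxl.
by apply: Pmono (Ps x xs); rewrite leq_maxr.
Qed.

Lemma fin_vec_lin (S : pzRingType) (a : S) (u v : nat -> S) :
  fin_vec u -> fin_vec v -> fin_vec (fun p => a * u p + v p).
Proof.
move=> [n1 u0] [n2 v0]; exists (maxn n1 n2) => p; rewrite geq_max => /andP[p1 p2].
by rewrite u0 // v0 // mulr0 addr0.
Qed.

Lemma mulr_intr_scale (F : pzRingType) (R : lalgType F) (z : int) (v : R) :
  z%:~R * v = (z%:~R : F) *: v.
Proof. by rewrite mulrzl scaler_int. Qed.

Lemma mulr_natr_scale (F : pzRingType) (R : lalgType F) (n : nat) (v : R) :
  n%:R * v = (n%:R : F) *: v.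
Proof. by rewrite mulr_natl scaler_nat. Qed.

Section Exponents.
Variable n : nat.
Implicit Types d e k : expo n.

Definition expo_deg k : nat := (\sum_(i < n) k i)%N.

Definition expo_decr k (i : 'I_n) : expo n := [ffun j => (k j - (j == i))%N].

Lemma finite_expo_le d : finite_set [set e | expo_le e d].
Proof.
pose b := (\max_(i < n) d i).+1.
pose val_ffun (f : {ffun 'I_n -> 'I_b}) : expo n := [ffun i => val (f i)].
apply: (sub_finite_set (B := val_ffun @` [set: {ffun 'I_n -> 'I_b}])).
  move=> e /= /forallP le_ed; exists [ffun i => inord (e i)] => //.
  apply/ffunP => i; rewrite !ffunE /= inordK // ltnS.
  exact: leq_trans (le_ed i) (leq_bigmax i).
exact/finite_image/finite_finset.
Qed.

Lemma expo_le_trans e d k : expo_le e d -> expo_le d k -> expo_le e k.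
Proof. by move=> /forallP ed /forallP dk; apply/forallP => i; exact: leq_trans (ed i) (dk i). Qed.

Lemma expo_le_refl d : expo_le d d.
Proof. exact/forallP. Qed.

Lemma expo0_le d : expo_le (expo0 n) d.
Proof. by apply/forallP => i; rewrite ffunE. Qed.

Lemma expo_sub0 d : expo_sub d (expo0 n) = d.
Proof. by apply/ffunP => i; rewrite !ffunE subn0. Qed.

Lemma expo_sub_lt d e : expo_le e d -> e != expo0 n -> expo_lt (expo_sub d e) d.
Proof.
move=> /forallP le_ed ne0; apply/andP; split.
  by apply/forallP => i; rewrite ffunE leq_subr.
apply: contra ne0 => /eqP/ffunP de; apply/eqP/ffunP => i.
by have := de i; have := le_ed i; rewrite /expo_sub !ffunE; move: (e i) (d i); lia.
Qed.

Lemma expo_deg_incr k i : expo_deg (expo_incr k i) = (expo_deg k).+1.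
Proof.
rewrite /expo_deg (eq_bigr (fun j => k j + (j == i))%N) => [|j _]; last by rewrite ffunE.
rewrite big_split /= -addn1; congr (_ + _)%N.
by rewrite (bigD1 i) //= eqxx big1 // => j /negPf ->.
Qed.

Lemma expo_decrK k i : (0 < k i)%N -> expo_incr (expo_decr k i) i = k.
Proof.
move=> ki_gt0; apply/ffunP => j; rewrite !ffunE.
by case: eqP => [->|_]; [rewrite subn1 addn1 prednK | rewrite subn0 addn0].
Qed.

Lemma expo_decr_at k i : (0 < k i)%N -> (expo_decr k i i).+1 = k i.
Proof. by move=> ki_gt0; rewrite ffunE eqxx subn1 prednK. Qed.

Lemma expo_deg_decr k i : (0 < k i)%N -> expo_deg (expo_decr k i) = (expo_deg k).-1.
Proof. by move=> ki_gt0; rewrite -{2}(expo_decrK ki_gt0) expo_deg_incr. Qed.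

Lemma expo_deg_eq0 k : expo_deg k = 0%N -> k = expo0 n.
Proof.
move=> /eqP; rewrite /expo_deg sum_nat_eq0 => /forall_inP k0.
by apply/ffunP => i; rewrite ffunE; apply/eqP/k0.
Qed.

Lemma expo_deg_lt e d : expo_lt e d -> (expo_deg e < expo_deg d)%N.
Proof.
move=> /andP[/forallP le_ed ne_ed].
have [i ne_i] : exists i, e i != d i.
  apply/existsP; apply: contraR ne_ed; rewrite negb_exists => /forallP ed.
  by apply/eqP/ffunP => i; apply/eqP; have := ed i; rewrite negbK.
rewrite /expo_deg (bigD1 i) //= [X in (_ < X)%N](bigD1 i) //= -addSn.
by rewrite leq_add ?ltn_neqAle ?ne_i ?le_ed // leq_sum.
Qed.

End Exponents.

Section Recurrence.
Variables (F : numFieldType) (R : comAlgType F) (l : nat) (m : 'I_l -> nat).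
Variable A : 'I_l -> nat -> nat -> expo l.+1 -> R.
Hypothesis A_epoly : forall i, epoly_mx (A i).
Hypothesis A0_strict_upper : forall i p q, (q <= p)%N -> A i p q (expo0 l.+1) = 0.

Definition lincomb (T : Type) (a : R) (x y : T -> nat -> R) : T -> nat -> R :=
  fun t p => a * x t p + y t p.

Definition bounded_by (n : nat) (h : expo l -> nat -> R) : Prop :=
  forall k p, ((n <= p)%N -> h k p = 0) /\ ((n < expo_deg k)%N -> h k p = 0).

Lemma bounded_by_mono n n' h : (n <= n')%N -> bounded_by n h -> bounded_by n' h.
Proof.
move=> le_nn' hn k p; split => lt; first by apply: (hn k p).1; exact: leq_trans lt.
by apply: (hn k p).2; exact: leq_ltn_trans lt.
Qed.

Definition A0mul (i : 'I_l) (v : nat -> R) (p : nat) : R :=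
  \sum_(q \in [set: nat]) A i p q (expo0 l.+1) * v q.

Lemma A0mul_supp i v n : (forall q, (n <= q)%N -> v q = 0) ->
  forall p, (n <= p.+1)%N -> A0mul i v p = 0.
Proof.
move=> v0 p le_np; rewrite /A0mul (fsbig_nat_bounded (n := n)) => [|q le_nq]; last first.
  by rewrite v0 // mulr0.
rewrite big_nat_cond big1 // => q /andP[/andP[_ lt_qn] _].
by rewrite A0_strict_upper ?mul0r // -ltnS (leq_trans lt_qn le_np).
Qed.

Lemma A0mul_lin i (a : R) u v p : fin_vec u -> fin_vec v ->
  A0mul i (fun q => a * u q + v q) p = a * A0mul i u p + A0mul i v p.
Proof.
move=> [n1 u0] [n2 v0]; set n := maxn n1 n2.
have u0n q : (n <= q)%N -> u q = 0 by rewrite geq_max => /andP[/u0].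
have v0n q : (n <= q)%N -> v q = 0 by rewrite geq_max => /andP[_ /v0].
rewrite /A0mul !(fsbig_nat_bounded (n := n)) => [|q le_nq|q le_nq|q le_nq];
  rewrite ?(u0n q le_nq) ?(v0n q le_nq) ?mulr0 ?addr0 ?mulr0 //.
by rewrite mulr_sumr -big_split; apply: eq_bigr => q _; rewrite mulrDr mulrCA.
Qed.

Lemma A0mul_delta i n b p :
  A0mul i (fun q => if q == n then b else 0) p = A i p n (expo0 l.+1) * b.
Proof. by rewrite /A0mul (fsbig_nat_only (n := n)) ?eqxx // => q /negPf ->; rewrite mulr0. Qed.

Lemma A_cols_bounded n : exists M, forall i q p d, (q < n)%N -> (M <= p)%N -> A i p q d = 0.
Proof.
elim: n => [|n [M HM]]; first by exists 0%N.
have [M' HM'] : exists M', forall i, [set: 'I_l] i -> forall p d, (M' <= p)%N -> A i p n d = 0.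
  apply: finite_uniform_bound; first exact: finite_finset.
    by move=> i N N' le_NN' HN p d le_N'p; apply: HN; exact: leq_trans le_N'p.
  by move=> i _; have [N HN] := (A_epoly i).2 n; exists N => p d /HN; apply.
exists (maxn M M') => i q p d; rewrite ltnS leq_eqVlt geq_max => /orP[/eqP->|lt_qn] /andP[].
  by move=> _; exact: HM'.
by move=> le_Mp _; exact: HM.
Qed.

Section ScaleSubA0.
Variables (i : 'I_l) (c : F).
Hypothesis c_neq0 : c != 0.

Lemma scale_subA0_supp v n : fin_vec v ->
  (forall p, (n <= p)%N -> c *: v p - A0mul i v p = 0) -> forall p, (n <= p)%N -> v p = 0.
Proof.
move=> [M v0] eq0; elim: M v0 => [|M IH] v0; first by move=> p _; exact: v0.
have [lt_Mn|le_nM] := ltnP M n; first by move=> p le_np; apply: v0; exact: leq_trans le_np.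
apply: IH => p; rewrite leq_eqVlt => /orP[/eqP<-|]; last exact: v0.
have /eqP := eq0 M le_nM; rewrite (A0mul_supp i v0) // subr0 scaler_eq0.
by rewrite (negPf c_neq0) => /eqP.
Qed.

(* Back substitution from the highest index down, [A_i(0)] being strictly upper triangular. *)
Lemma scale_subA0_solve n u : (forall p, (n <= p)%N -> u p = 0) ->
  exists v, (forall p, (n <= p)%N -> v p = 0) /\ forall p, c *: v p - A0mul i v p = u p.
Proof.
elim: n u => [|n IH] u u0.
  exists (fun=> 0); split=> // p.
  by rewrite scaler0 (@A0mul_supp i _ 0) ?subr0 ?u0.
pose e q := if q == n then c^-1 *: u n else 0.
have Ae p : A0mul i e p = A i p n (expo0 l.+1) * (c^-1 *: u n) by exact: A0mul_delta.
have [|v [v0 ve]] := IH (fun p => u p - (c *: e p - A0mul i e p)).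
  move=> p; rewrite leq_eqVlt Ae /e => /orP[/eqP<-|lt_np].
    by rewrite eqxx A0_strict_upper // mul0r subr0 scalerA divff // scale1r subrr.
  by rewrite gtn_eqF // A0_strict_upper ?mul0r ?scaler0 ?subr0 ?u0 ?subrr // ltnW.
exists (fun p => 1 * v p + e p); split.
  move=> p lt_np; rewrite v0 ?(leq_trans (leqnSn n)) // /e gtn_eqF //.
  by rewrite mulr0 addr0.
move=> p; rewrite A0mul_lin; last 2 first.
- by exists n.
- by exists n.+1 => q lt_nq; rewrite /e gtn_eqF.
by rewrite !mul1r scalerDr opprD addrACA ve subrK.
Qed.

End ScaleSubA0.

Lemma bounded_by_fin n h : bounded_by n h -> forall k, fin_vec (h k).
Proof. by move=> hn k; exists n => p le_np; exact: (hn k p).1. Qed.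

Lemma bounded_by_lincomb a n1 n2 h1 h2 :
  bounded_by n1 h1 -> bounded_by n2 h2 -> bounded_by (maxn n1 n2) (lincomb a h1 h2).
Proof.
move=> b1 b2 k p; have [b1p b1k] := b1 k p; have [b2p b2k] := b2 k p.
rewrite /lincomb geq_max gtn_max.
by split=> [/andP[/b1p-> /b2p->]|/andP[/b1k-> /b2k->]]; rewrite mulr0 addr0.
Qed.

Definition coef_eq (i : 'I_l) (c : F) (h Y : expo l -> nat -> R) : Prop :=
  forall (k : expo l) (p : nat),
    (k i).+1%:R *: h (expo_incr k i) p + c *: h k p = A0mul i (h k) p + Y k p.

Lemma coef_eq_lin i c a h1 h2 Y1 Y2 :
  (forall k, fin_vec (h1 k)) -> (forall k, fin_vec (h2 k)) ->
  coef_eq i c h1 Y1 -> coef_eq i c h2 Y2 -> coef_eq i c (lincomb a h1 h2) (lincomb a Y1 Y2).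
Proof.
move=> f1 f2 e1 e2 k p; rewrite /lincomb A0mul_lin // !scalerDr !scalerAr.
by rewrite addrACA -mulrDr e1 e2 mulrDr addrACA.
Qed.

Section OffDiagonal.
Variables (i : 'I_l) (c : F).
Hypothesis c_neq0 : c != 0.

Lemma coef_eq_homog_eq0 n h Y : bounded_by n h -> coef_eq i c h Y ->
  (forall k p, Y k p = 0) -> forall k p, h k p = 0.
Proof.
move=> hn he Y0.
suff h0 t k : (n < expo_deg k + t)%N -> forall p, h k p = 0.
  by move=> k; apply: (h0 n.+1); rewrite addnS ltnS leq_addl.
elim: t k => [|t IH] k lt_nk.
  by move=> p; apply: (hn k p).2; rewrite -[expo_deg k]addn0.
have hk1 p : h (expo_incr k i) p = 0 by apply: IH; rewrite expo_deg_incr addSn -addnS.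
move=> p; apply: (@scale_subA0_supp i c c_neq0 (h k) 0) => // [|q _].
  exact: bounded_by_fin hn k.
by have := he k q; rewrite hk1 scaler0 add0r Y0 addr0 => ->; rewrite subrr.
Qed.

Lemma coef_eq_unique n1 n2 h1 h2 Y : bounded_by n1 h1 -> bounded_by n2 h2 ->
  coef_eq i c h1 Y -> coef_eq i c h2 Y -> h1 = h2.
Proof.
move=> b1 b2 e1 e2.
have e12 := coef_eq_lin (-1) (bounded_by_fin b2) (bounded_by_fin b1) e2 e1.
have Y0 k p : lincomb (-1) Y Y k p = 0 by rewrite /lincomb mulN1r addNr.
apply/funext => k; apply/funext => p; apply/eqP; rewrite -subr_eq0 -mulN1r addrC.
exact/eqP/(coef_eq_homog_eq0 (bounded_by_lincomb (-1) b2 b1) e12 Y0).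
Qed.

Lemma coef_eq_solvable n Y : bounded_by n Y -> exists h, bounded_by n h /\ coef_eq i c h Y.
Proof.
move=> bY.
have /choice[S HS] : forall u : nat -> R, exists v : nat -> R,
    (forall p, (n <= p)%N -> u p = 0) ->
    (forall p, (n <= p)%N -> v p = 0) /\ forall p, c *: v p - A0mul i v p = u p.
  move=> u; have [u0|nu0] := pselect (forall p, (n <= p)%N -> u p = 0).
    by have [v hv] := @scale_subA0_solve i c c_neq0 n u u0; exists v.
  by exists u => /nu0.
(* [hrec t k] is the value at [k] of the solution vanishing from [k + t e_i] on; the fuel
   [n.+1 - expo_deg k] reaches past the degrees where [Y] can be nonzero. *)
pose fix hrec (t : nat) (k : expo l) {struct t} : nat -> R :=
  if t is t'.+1 then S (fun p => Y k p - (k i).+1%:R *: hrec t' (expo_incr k i) p)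
  else fun=> 0.
have hrec_supp t k p : (n <= p)%N -> hrec t k p = 0.
  elim: t k p => [//|t IH] k p le_np /=.
  apply: (HS _ _).1 => // q le_nq.
  by rewrite (bY k q).1 // IH // scaler0 subr0.
exists (fun k => hrec (n.+1 - expo_deg k)%N k); split.
  move=> k p; split; first exact: hrec_supp.
  by move=> lt_nk; rewrite (_ : n.+1 - _ = 0)%N //; apply/eqP; rewrite subn_eq0.
move=> k p; rewrite expo_deg_incr subSS.
have [lt_nk|le_kn] := ltnP n (expo_deg k).
  have -> : (n - expo_deg k = 0)%N by apply/eqP; rewrite subn_eq0 ltnW.
  have -> : (n.+1 - expo_deg k = 0)%N by apply/eqP; rewrite subn_eq0.
  by rewrite /= !scaler0 addr0 (bY k p).2 // addr0 (@A0mul_supp i _ 0).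
rewrite subSn //=.
pose u q := Y k q - (k i).+1%:R *: hrec (n - expo_deg k)%N (expo_incr k i) q.
have [|_ /(_ p)] := HS u.
  by move=> q le_nq; rewrite /u (bY k q).1 // hrec_supp // scaler0 subr0.
move: (S u) => v Sv.
have -> : c *: v p = (c *: v p - A0mul i v p) + A0mul i v p by ring.
by rewrite Sv /u; ring.
Qed.

End OffDiagonal.

Section Diagonal.
Variables (v0 : nat -> R) (Y : 'I_l -> expo l -> nat -> R).

Fixpoint diag_rec (t : nat) (k : expo l) : nat -> R :=
  if t is t'.+1 then
    if [pick j | (0 < k j)%N] is Some j then fun p =>
      ((k j)%:R : F)^-1 *: (A0mul j (diag_rec t' (expo_decr k j)) p + Y j (expo_decr k j) p)
    else v0
  else v0.

Lemma diag_recS t k : (0 < expo_deg k)%N -> exists2 j, (0 < k j)%N &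
  diag_rec t.+1 k = fun p =>
    ((k j)%:R : F)^-1 *: (A0mul j (diag_rec t (expo_decr k j)) p + Y j (expo_decr k j) p).
Proof.
move=> deg_gt0 /=; case: pickP => [j kj_gt0|k0]; first by exists j.
move: deg_gt0; rewrite /expo_deg big1 // => j _.
by apply/eqP; rewrite -leqn0 leqNgt k0.
Qed.

Lemma diag_rec_unique h : h (expo0 l) = v0 -> (forall i, coef_eq i 0 h (Y i)) ->
  forall k, h k = diag_rec (expo_deg k) k.
Proof.
move=> h0 he; suff H t k : expo_deg k = t -> h k = diag_rec t k by move=> k; exact: H.
elim: t k => [|t IH] k deg_k; first by rewrite (expo_deg_eq0 deg_k).
have deg_gt0 : (0 < expo_deg k)%N by rewrite deg_k.
have [j kj_gt0 ->] := diag_recS t deg_gt0.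
apply/funext => p; have := he j (expo_decr k j) p.
rewrite expo_decrK // expo_decr_at // scale0r addr0 -IH; last by rewrite expo_deg_decr // deg_k.
by move=> <-; rewrite scalerA mulVf ?scale1r // pnatr_eq0 -lt0n.
Qed.

Variable n : nat.
Hypotheses (v0_supp : forall p, (n <= p)%N -> v0 p = 0)
  (Y_bounded : forall j, bounded_by n (Y j)).

Lemma diag_rec_supp t k p : (n <= p)%N -> diag_rec t k p = 0.
Proof.
elim: t k p => [|t IH] k p le_np /=; first exact: v0_supp.
case: pickP => [j _|_]; last exact: v0_supp.
by rewrite (Y_bounded j _ p).1 // (@A0mul_supp j _ n (IH _)) ?addr0 ?scaler0 // leqW.
Qed.

(* Each step through [A_j(0)] lowers the support by one index, and [Y] vanishes in
   degrees above [n]. *)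
Lemma diag_rec_bounded : bounded_by (n + n) (fun k => diag_rec (expo_deg k) k).
Proof.
suff H s k p : expo_deg k = (n.+1 + s)%N -> (n - s <= p)%N -> diag_rec (expo_deg k) k p = 0.
  move=> k p; split=> [le_np|lt_nk].
    by apply: diag_rec_supp; exact: leq_trans (leq_addr n n) le_np.
  by apply: (H (expo_deg k - n.+1)%N); lia.
elim: s k p => [|s IH] k p deg_k le_np; first by apply: diag_rec_supp; rewrite subn0 in le_np.
have deg_gt0 : (0 < expo_deg k)%N by rewrite deg_k.
rewrite -(prednK deg_gt0); have [j kj_gt0 ->] := diag_recS (expo_deg k).-1 deg_gt0.
have deg_kj : expo_deg (expo_decr k j) = (n.+1 + s)%N by rewrite expo_deg_decr // deg_k addnS.
rewrite (Y_bounded j _ p).2; last by rewrite deg_kj ltnS leq_addr.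
rewrite addr0 (@A0mul_supp j _ (n - s)) ?scaler0 // => [q le_nq|]; last by lia.
by rewrite deg_k addnS -deg_kj; exact: IH.
Qed.

End Diagonal.

Lemma diag_rec_lin a n v0 w0 Y Z :
  (forall p, (n <= p)%N -> v0 p = 0) -> (forall p, (n <= p)%N -> w0 p = 0) ->
  (forall j, bounded_by n (Y j)) -> (forall j, bounded_by n (Z j)) ->
  forall t k, diag_rec (fun p => a * v0 p + w0 p) (fun j => lincomb a (Y j) (Z j)) t k =
              fun p => a * diag_rec v0 Y t k p + diag_rec w0 Z t k p.
Proof.
move=> v0_supp w0_supp bY bZ; elim=> [//|t IH] k /=; case: pickP => [j _|_] //.
apply/funext => p; rewrite IH A0mul_lin; try by exists n => q; apply: diag_rec_supp.
by rewrite /lincomb -scalerAr -scalerDr; congr (_ *: _); ring.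
Qed.

Lemma series_bounded g d : is_series g -> exists n, bounded_by n (g d).
Proof.
move=> gs; pose supp := [set k | exists p, g d k p != 0].
have [J HJ] : exists J, forall k, supp k -> (expo_deg k <= J)%N.
  apply: finite_uniform_bound; first exact: (gs d).1.
    by move=> k N N' le_NN' le_kN; exact: leq_trans le_kN le_NN'.
  by move=> k _; exists (expo_deg k).
have [n Hn] : exists n, forall k, supp k -> forall p, (n <= p)%N -> g d k p = 0.
  apply: finite_uniform_bound; first exact: (gs d).1.
    by move=> k N N' le_NN' HN p le_N'p; apply: HN; exact: leq_trans le_N'p.
  by move=> k _; exact: (gs d).2.
exists (maxn n J) => k p; have [nz_k|z_k] := pselect (exists p, g d k p != 0); last first.
  by split=> _; apply: contra_notP z_k => nz; exists p; exact/eqP.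
rewrite geq_max gtn_max; split=> [/andP[le_np _]|/andP[_ lt_Jk]]; first exact: Hn.
by have := HJ k nz_k; rewrite leqNgt lt_Jk.
Qed.

Definition data := expo l.+1 -> nat -> R.

Definition fin_data (x : data) : Prop := forall e, fin_vec (x e).

Definition const_terms (g : expo l.+1 -> expo l -> nat -> R) : data := fun e => g e (expo0 l).

Definition agree_on_diag_below (d : expo l.+1) (x y : data) : Prop :=
  forall e, on_diag m e -> expo_le e d -> x e = y e.

Lemma fin_data_lincomb a x y : fin_data x -> fin_data y -> fin_data (lincomb a x y).
Proof. by move=> fx fy e; exact: fin_vec_lin. Qed.

Lemma fin_const_terms g : is_series g -> fin_data (const_terms g).
Proof. by move=> gs e; exact: (gs e).2. Qed.

(* [Phi] acts on all finitely supported data, not only on constant terms of solutions,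
   so that it can be linear; the matrices of the recurrence are its values on [unit_data]. *)
Record represents (d : expo l.+1) (Phi : data -> expo l -> nat -> R) : Prop := Represents {
  represents_lin : forall a x y, fin_data x -> fin_data y ->
    Phi (lincomb a x y) = lincomb a (Phi x) (Phi y);
  represents_local : forall x y, fin_data x -> fin_data y ->
    agree_on_diag_below d x y -> Phi x = Phi y;
  represents_bounded : forall x, fin_data x -> exists n, bounded_by n (Phi x);
  represents_solution : forall g, is_solution m A g -> g d = Phi (const_terms g) }.

Lemma wt_on_diag i d : on_diag m d -> wt F m i d = 0.
Proof. by move=> /forallP/(_ i)/eqP diag_d; rewrite /wt diag_d subrr. Qed.

Section InductionStep.
Variables (d : expo l.+1) (Phi : expo l.+1 -> data -> expo l -> nat -> R).
Hypothesis Phi_lower : forall e, expo_lt e d -> represents e (Phi e).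

Definition shifts : set (expo l.+1) := [set e | expo_le e d /\ e != expo0 l.+1].

Lemma finite_shifts : finite_set shifts.
Proof. by apply: sub_finite_set (finite_expo_le d) => e []. Qed.

Lemma shifts_lt e : shifts e -> expo_lt (expo_sub d e) d.
Proof. by move=> [le_ed ne0]; exact: expo_sub_lt. Qed.

Definition lower_terms (x : data) (i : 'I_l) (k : expo l) (p : nat) : R :=
  \sum_(q \in [set: nat]) \sum_(e \in shifts) A i p q e * Phi (expo_sub d e) x k q.

Lemma lower_bounded x : fin_data x ->
  exists n, forall e, shifts e -> bounded_by n (Phi (expo_sub d e) x).
Proof.
move=> fx; apply: (finite_uniform_bound (P := fun e n => bounded_by n (Phi (expo_sub d e) x))).
- exact: finite_shifts.
- by move=> e N N'; exact: bounded_by_mono.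
- by move=> e /shifts_lt/Phi_lower/represents_bounded; apply.
Qed.

Lemma lower_termsE x n : (forall e, shifts e -> bounded_by n (Phi (expo_sub d e) x)) ->
  forall i k p, lower_terms x i k p =
    \sum_(0 <= q < n) \sum_(e \in shifts) A i p q e * Phi (expo_sub d e) x k q.
Proof.
move=> bPhi i k p; apply: fsbig_nat_bounded => q le_nq.
by apply: fsbig1 => e De; rewrite (bPhi e De k q).1 ?mulr0.
Qed.

Lemma lower_terms_bounded x : fin_data x -> exists n, forall i, bounded_by n (lower_terms x i).
Proof.
move=> /lower_bounded[n bPhi]; have [M HM] := A_cols_bounded n.
exists (maxn n M) => i k p; split=> [|lt_nk].
  rewrite geq_max => /andP[_ le_Mp]; rewrite (lower_termsE bPhi) big_nat_cond.
  rewrite big1 // => q /andP[/andP[_ lt_qn] _].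
  by apply: fsbig1 => e _; rewrite HM ?mul0r.
rewrite /lower_terms fsbig1 // => q _; apply: fsbig1 => e De.
by rewrite (bPhi e De k q).2 ?mulr0 // (leq_ltn_trans (leq_maxl n M)).
Qed.

Lemma lower_terms_lin a x y : fin_data x -> fin_data y ->
  lower_terms (lincomb a x y) = fun i => lincomb a (lower_terms x i) (lower_terms y i).
Proof.
move=> fx fy; have [n1 b1] := lower_bounded fx; have [n2 b2] := lower_bounded fy.
have Phi_lin e : shifts e -> Phi (expo_sub d e) (lincomb a x y) =
    lincomb a (Phi (expo_sub d e) x) (Phi (expo_sub d e) y).
  by move=> /shifts_lt/Phi_lower rep; exact: (represents_lin rep _ fx fy).
have bx e : shifts e -> bounded_by (maxn n1 n2) (Phi (expo_sub d e) x).
  by move=> De; exact: bounded_by_mono (leq_maxl n1 n2) (b1 e De).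
have by' e : shifts e -> bounded_by (maxn n1 n2) (Phi (expo_sub d e) y).
  by move=> De; exact: bounded_by_mono (leq_maxr n1 n2) (b2 e De).
have bxy e : shifts e -> bounded_by (maxn n1 n2) (Phi (expo_sub d e) (lincomb a x y)).
  by move=> De; rewrite Phi_lin //; exact: bounded_by_lincomb (b1 e De) (b2 e De).
apply/funext => i; apply/funext => k; apply/funext => p.
rewrite [RHS]/lincomb (lower_termsE bxy) (lower_termsE bx) (lower_termsE by').
rewrite mulr_sumr -big_split; apply: eq_bigr => q _.
rewrite !(fsbig_finite _ _ finite_shifts) mulr_sumr -big_split; apply: eq_big_seq => e.
rewrite in_fset_set ?inE => [De|]; last exact: finite_shifts.
by rewrite Phi_lin // /lincomb mulrDr mulrCA.
Qed.

Lemma lower_terms_local x y : fin_data x -> fin_data y ->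
  agree_on_diag_below d x y -> lower_terms x = lower_terms y.
Proof.
move=> fx fy xy; apply/funext => i; apply/funext => k; apply/funext => p.
apply: eq_fsbigr => q _; apply: eq_fsbigr => e /set_mem De.
rewrite (represents_local (Phi_lower (shifts_lt De)) fx fy) // => e' diag_e' le_e'.
by apply: xy => //; apply: expo_le_trans le_e' (andP (shifts_lt De)).1.
Qed.

Lemma solution_coef_eq g : is_solution m A g ->
  forall i, coef_eq i (wt F m i d) (g d) (lower_terms (const_terms g) i).
Proof.
move=> gsol i k p; have [gs geq] := gsol.
have [n1 bg] := series_bounded d gs; have [n2 bPhi] := lower_bounded (fin_const_terms gs).
have bPhi' e : shifts e -> bounded_by (maxn n1 n2) (Phi (expo_sub d e) (const_terms g)).
  by move=> De; exact: bounded_by_mono (leq_maxr n1 n2) (bPhi e De).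
have A0mulE : A0mul i (g d k) p = \sum_(0 <= q < maxn n1 n2) A i p q (expo0 l.+1) * g d k q.
  apply: fsbig_nat_bounded => q; rewrite geq_max => /andP[le_n1q _].
  by rewrite (bg k q).1 ?mulr0.
have split_shifts : [set e | expo_le e d] `\ expo0 l.+1 = shifts.
  by apply/seteqP; split=> e /= [le_ed ne0]; split=> //; apply/eqP.
have inner q : \sum_(e \in [set e | expo_le e d]) A i p q e * g (expo_sub d e) k q =
    A i p q (expo0 l.+1) * g d k q +
    \sum_(e \in shifts) A i p q e * Phi (expo_sub d e) (const_terms g) k q.
  rewrite (fsbigD1 (expo0 l.+1)) ?expo_sub0 ?split_shifts //=; last 2 first.
  - exact: finite_expo_le.
  - exact: expo0_le.
  congr (_ + _); apply: eq_fsbigr => e /set_mem De.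
  by rewrite (represents_solution (Phi_lower (shifts_lt De)) gsol).
have := geq i d k p; rewrite /dser /mxser mulr_natr_scale mulr_intr_scale => ->.
under eq_fsbigr do rewrite inner.
rewrite A0mulE (lower_termsE bPhi') -big_split; apply: fsbig_nat_bounded => q le_nq.
rewrite (bg k q).1 ?mulr0 ?add0r; last exact: leq_trans (leq_maxl n1 n2) le_nq.
by apply: fsbig1 => e De; rewrite (bPhi' e De k q).1 ?mulr0.
Qed.

Lemma represents_off_diag i : wt F m i d != 0 -> exists Phi_d, represents d Phi_d.
Proof.
move=> wt_neq0.
have /choice[H HH] : forall x : data, exists h, fin_data x ->
    exists n, bounded_by n h /\ coef_eq i (wt F m i d) h (lower_terms x i).
  move=> x; have [fx|nfx] := pselect (fin_data x); last by exists (fun _ _ => 0) => /nfx.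
  have [n bY] := lower_terms_bounded fx.
  by have [h hh] := coef_eq_solvable i wt_neq0 (bY i); exists h => _; exists n.
have H_unique x n h : fin_data x -> bounded_by n h ->
    coef_eq i (wt F m i d) h (lower_terms x i) -> H x = h.
  by move=> fx bh eh; have [n' [bH eH]] := HH x fx; exact: coef_eq_unique bH bh eH eh.
(* Linearity and locality of [H] follow from uniqueness. *)
exists H; split.
- move=> a x y fx fy; have [n1 [b1 e1]] := HH x fx; have [n2 [b2 e2]] := HH y fy.
  apply: H_unique (bounded_by_lincomb a b1 b2) _; first exact: fin_data_lincomb.
  rewrite lower_terms_lin //.
  exact: coef_eq_lin (bounded_by_fin b1) (bounded_by_fin b2) e1 e2.
- move=> x y fx fy xy; have [n [b e]] := HH y fy.
  by apply: H_unique b _ => //; rewrite (lower_terms_local fx fy xy).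
- by move=> x fx; have [n [b _]] := HH x fx; exists n.
- move=> g gsol; have [gs _] := gsol; have [n bg] := series_bounded d gs.
  by apply/esym/(H_unique _ n) => //; [exact: fin_const_terms | exact: solution_coef_eq].
Qed.

Lemma represents_on_diag : on_diag m d -> exists Phi_d, represents d Phi_d.
Proof.
move=> diag_d; exists (fun x k => diag_rec (x d) (lower_terms x) (expo_deg k) k).
have bounds x : fin_data x -> exists n,
    (forall p, (n <= p)%N -> x d p = 0) /\ forall i, bounded_by n (lower_terms x i).
  move=> fx; have [n1 x0] := fx d; have [n2 bY] := lower_terms_bounded fx.
  exists (maxn n1 n2); split=> [p|i]; last exact: bounded_by_mono (leq_maxr n1 n2) (bY i).
  by rewrite geq_max => /andP[/x0].
split.
- move=> a x y fx fy; apply/funext => k.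
  have [n1 [x0 bx]] := bounds x fx; have [n2 [y0 by']] := bounds y fy.
  rewrite lower_terms_lin // (@diag_rec_lin _ (maxn n1 n2)) // => [p|p|j|j].
  + by rewrite geq_max => /andP[/x0].
  + by rewrite geq_max => /andP[_ /y0].
  + exact: bounded_by_mono (leq_maxl n1 n2) (bx j).
  + exact: bounded_by_mono (leq_maxr n1 n2) (by' j).
- move=> x y fx fy xy; rewrite (lower_terms_local fx fy xy) xy //.
  exact: expo_le_refl.
- by move=> x /bounds[n [x0 bY]]; exists (n + n)%N; exact: diag_rec_bounded.
- move=> g gsol; apply/funext; apply: diag_rec_unique => // i.
  by have := solution_coef_eq gsol i; rewrite wt_on_diag.
Qed.

End InductionStep.

Lemma represents_exists d : exists Phi, represents d Phi.
Proof.
elim: {d}(expo_deg d).+1 {-2}d (ltnSn (expo_deg d)) => // n IH d lt_dn.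
have /choice[Phi HPhi] : forall e, exists Phi_e, expo_lt e d -> represents e Phi_e.
  move=> e; have [lt_ed|nlt_ed] := pselect (expo_lt e d); last first.
    by exists (fun _ _ _ => 0) => /nlt_ed.
  by have [Phi_e rep] := IH e (leq_trans (expo_deg_lt lt_ed) lt_dn); exists Phi_e.
have [diag_d|] := boolP (on_diag m d); first exact: represents_on_diag HPhi diag_d.
move=> /forallPn[i /eqP ne_i]; apply: (represents_off_diag HPhi (i := i)).
by rewrite /wt intr_eq0 subr_eq0 eqz_nat; apply/eqP.
Qed.

Definition diag_below (d : expo l.+1) : set (expo l.+1) :=
  [set e | on_diag m e /\ expo_le e d].

Lemma finite_diag_below d : finite_set (diag_below d).
Proof. by apply: sub_finite_set (finite_expo_le d) => e []. Qed.

Definition unit_data (e : expo l.+1) (r : nat) : data :=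
  fun e' q => if (e' == e) && (q == r) then 1 else 0.

Lemma fin_unit_data e r : fin_data (unit_data e r).
Proof. by move=> e'; exists r.+1 => q lt_rq; rewrite /unit_data gtn_eqF ?andbF. Qed.

Lemma fin_data_sum (T : Type) (s : seq T) (c : T -> R) (D : T -> data) :
  (forall j, fin_data (D j)) -> fin_data (fun e q => \sum_(j <- s) c j * D j e q).
Proof.
move=> fD e; elim: s => [|j s fs]; first by exists 0%N => q _; rewrite big_nil.
by have [n Hn] := fin_vec_lin (c j) (fD j e) fs; exists n => q /Hn; rewrite big_cons.
Qed.

Lemma represents_sum d Phi (T : Type) (s : seq T) (c : T -> R) (D : T -> data) :
  represents d Phi -> (forall j, fin_data (D j)) ->
  Phi (fun e q => \sum_(j <- s) c j * D j e q) = fun k p => \sum_(j <- s) c j * Phi (D j) k p.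
Proof.
move=> rep fD; elim: s => [|j s IH].
  have fin0 : fin_data (fun _ _ => 0) by move=> e; exists 0%N.
  have -> : (fun e q => \sum_(j <- [::]) c j * D j e q) =
      lincomb (-1) (fun _ _ => 0) (fun _ _ => 0).
    by apply/funext => e; apply/funext => q; rewrite big_nil /lincomb mulr0 addr0.
  rewrite (represents_lin rep _ fin0 fin0).
  by apply/funext => k; apply/funext => p; rewrite big_nil /lincomb mulN1r addNr.
have -> : (fun e q => \sum_(j' <- j :: s) c j' * D j' e q) =
    lincomb (c j) (D j) (fun e q => \sum_(j' <- s) c j' * D j' e q).
  by apply/funext => e; apply/funext => q; rewrite big_cons.
rewrite (represents_lin rep _ (fD j) (fin_data_sum _ _ fD)) IH.
by apply/funext => k; apply/funext => p; rewrite big_cons.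
Qed.

Definition coef_mx (Phi : data -> expo l -> nat -> R) (k : expo l) (e : expo l.+1) :
    nat -> nat -> R :=
  fun p r => Phi (unit_data e r) k p.

Lemma coef_mx_colfin d Phi k e : represents d Phi -> colfin_mx (coef_mx Phi k e).
Proof.
move=> rep r; have [n bn] := represents_bounded rep (fin_unit_data e r).
by exists n => p le_np; exact: (bn k p).1.
Qed.

(* Expand [x] in the basis [unit_data], then use linearity and locality of [Phi]. *)
Lemma represents_mxv d Phi x k p : represents d Phi -> fin_data x ->
  Phi x k p = \sum_(e \in diag_below d) mxv (coef_mx Phi k e) (x e) p.
Proof.
move=> rep fx.
have [n x0] : exists n, forall e, diag_below d e -> forall r, (n <= r)%N -> x e r = 0.
  apply: (finite_uniform_bound (P := fun e n => forall r, (n <= r)%N -> x e r = 0)).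
  - exact: finite_diag_below.
  - by move=> e N N' le_NN' HN r le_N'r; apply: HN; exact: leq_trans le_N'r.
  - by move=> e _; exact: fx.
pose s := finmap.enum_fset (fset_set (diag_below d)).
have in_s e : (e \in s) = `[< diag_below d e >].
  by rewrite in_fset_set ?inE //; exact: finite_diag_below.
pose er := [seq (e, r) | e <- s, r <- iota 0 n].
pose x' (e' : expo l.+1) (q : nat) := \sum_(j <- er) x j.1 j.2 * unit_data j.1 j.2 e' q.
have x'E : agree_on_diag_below d x x'.
  move=> e' diag_e' le_e'd; apply/funext => q.
  rewrite /x' big_allpairs (bigD1_seq e') ?finmap.fset_uniq ?in_s ?asboolE //=.
  rewrite [X in _ + X]big1_seq ?addr0 => [|e /andP[ne_e _]]; last first.
    by rewrite big1 // => r _; rewrite /unit_data eq_sym (negPf ne_e) mulr0.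
  under eq_bigr do rewrite /unit_data eqxx /=.
  have [lt_qn|le_nq] := ltnP q n.
    rewrite (bigD1_seq q) ?mem_iota ?iota_uniq //= eqxx mulr1 big1_seq ?addr0 //.
    by move=> r /andP[ne_r _]; rewrite eq_sym (negPf ne_r) mulr0.
  rewrite x0 // big1_seq // => r; rewrite mem_iota add0n => /andP[_ lt_rn].
  by rewrite gtn_eqF ?mulr0 // (leq_trans lt_rn).
have fin_unit j : fin_data (unit_data j.1 j.2) by exact: fin_unit_data.
rewrite (represents_local rep fx (fin_data_sum _ _ fin_unit) x'E) /x' (represents_sum _ _ rep) //=.
rewrite big_allpairs (fsbig_finite _ _ (finite_diag_below d)) -/s.
apply: eq_big_seq => e; rewrite in_s asboolE => De.
rewrite /mxv (fsbig_nat_bounded (n := n)) => [|r le_nr]; last by rewrite x0 ?mulr0.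
by rewrite /index_iota subn0; apply: eq_bigr => r _; rewrite mulrC.
Qed.

Lemma solution_unique g1 g2 : is_solution m A g1 -> is_solution m A g2 ->
  (forall d p, on_diag m d -> g1 d (expo0 l) p = g2 d (expo0 l) p) ->
  forall d k p, g1 d k p = g2 d k p.
Proof.
move=> sol1 sol2 eq0 d k p; have [Phi rep] := represents_exists d.
have [[gs1 _] [gs2 _]] := (sol1, sol2).
rewrite (represents_solution rep sol1) (represents_solution rep sol2).
rewrite (represents_local rep (fin_const_terms gs1) (fin_const_terms gs2)) // => e diag_e _.
by apply/funext => q; exact: eq0.
Qed.

Lemma solution_recurrence d k :
  exists (C0 : nat -> nat -> R) (N : nat) (C : 'I_N -> nat -> nat -> R)
         (dd : 'I_N -> expo l.+1) (kk : 'I_N -> expo l),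
    colfin_mx C0 /\ (forall j, colfin_mx (C j)) /\
    (forall j, expo_lt (dd j) d) /\
    forall g, is_solution m A g -> forall p,
      g d k p = (if on_diag m d then mxv C0 (g d (expo0 l)) p else 0)
                + \sum_(j < N) mxv (C j) (g (dd j) (kk j)) p.
Proof.
have [Phi rep] := represents_exists d.
have fin_lower : finite_set (diag_below d `\ d) by exact/finite_setD/finite_diag_below.
pose s := finmap.enum_fset (fset_set (diag_below d `\ d)).
exists (coef_mx Phi k d), (size s), (fun j => coef_mx Phi k (nth d s j)), (nth d s).
exists (fun=> expo0 l).
split; first exact: coef_mx_colfin rep.
split; first by move=> j; exact: coef_mx_colfin rep.
split.
  move=> j; have : nth d s j \in s by exact: mem_nth.
  by rewrite in_fset_set // inE => -[[_ le_jd] /eqP ne_jd]; apply/andP.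
move=> g gsol p; have [gs _] := gsol.
rewrite {1}(represents_solution rep gsol) (represents_mxv _ _ rep (fin_const_terms gs)).
have -> : \sum_(e \in diag_below d) mxv (coef_mx Phi k e) (const_terms g e) p =
    (if on_diag m d then mxv (coef_mx Phi k d) (g d (expo0 l)) p else 0) +
    \sum_(e \in diag_below d `\ d) mxv (coef_mx Phi k e) (const_terms g e) p.
  case: ifP => [diag_d|ndiag_d]; last by rewrite add0r not_setD1 // => -[]; rewrite ndiag_d.
  rewrite (fsbigD1 d) //; first exact: finite_diag_below.
  by split=> //; exact: expo_le_refl.
by rewrite (fsbig_finite _ _ fin_lower) (big_nth d) big_mkord.
Qed.

End Recurrence.

Theorem proposition6p1 (F : realType) (R : comAlgType F) (l : nat) (m : 'I_l -> nat)
  (A : 'I_l -> nat -> nat -> expo l.+1 -> R) :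
  (0 < l)%N ->
  (forall i, (0 < m i)%N) ->
  (forall i, epoly_mx (A i)) ->
  (* a) *)
  (forall i j p r d, emx_mul (A i) (A j) p r d = emx_mul (A j) (A i) p r d) ->
  (* b) *)
  (forall i j p q d, dmx m i (A j) p q d = dmx m j (A i) p q d) ->
  (* c) *)
  (forall i, exists (A' : nat -> nat -> expo l.+1 -> R) (A'' : nat -> nat -> R),
      epoly_mx A' /\ colfin_mx A'' /\
      (forall p q d, A i p q d = A' p q d + (if d == expo0 l.+1 then A'' p q else 0)) /\
      (forall p q d, (p <= q)%N -> A' p q d = 0) /\
      (forall p q d, A' p q d != 0 -> wt R m i d != 0) /\
      (forall p q, (q <= p)%N -> A'' p q = 0)) ->
  (* uniqueness *)
  (forall g1 g2, is_solution m A g1 -> is_solution m A g2 ->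
     (forall d p, on_diag m d -> g1 d (expo0 l) p = g2 d (expo0 l) p) ->
     forall d k p, g1 d k p = g2 d k p) /\
  (* recurrence relations, R-linear in coefficients *)
  (forall (d : expo l.+1) (k : expo l),
     exists (C0 : nat -> nat -> R) (N : nat) (C : 'I_N -> nat -> nat -> R)
            (dd : 'I_N -> expo l.+1) (kk : 'I_N -> expo l),
       colfin_mx C0 /\ (forall j, colfin_mx (C j)) /\
       (forall j, expo_lt (dd j) d) /\
       forall g, is_solution m A g -> forall p,
         g d k p = (if on_diag m d then mxv C0 (g d (expo0 l)) p else 0)
                   + \sum_(j < N) mxv (C j) (g (dd j) (kk j)) p).
Proof.
(* Conditions a) and b), [0 < l] and [0 < m_i] are only needed for existence. *)
move=> _ _ A_epoly _ _ decomp.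
have A0_strict_upper i p q : (q <= p)%N -> A i p q (expo0 l.+1) = 0.
  move=> le_qp; have [A' [A'' [_ [_ [A_eq [_ [A'_wt A''_upper]]]]]]] := decomp i.
  rewrite A_eq eqxx A''_upper // addr0; apply/eqP; apply: contraT => /A'_wt.
  by rewrite /wt !ffunE muln0 subrr eqxx.
split; first exact: (solution_unique A_epoly A0_strict_upper).
exact: (solution_recurrence m A_epoly A0_strict_upper).
Qed.
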